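(* Let $x\in\mathbb{R}^n$ and consider the linear model $\Phi(x;w)=\Phi(x;(A,b))=Ax+b$ with parameter $w=(A,b)$, $A\in\mathbb{R}^{m\times n}$, $b\in\mathbb{R}^m$, and the divergence $div(u,v)=\|u-v\|_2^2$. Let $K\ge1$, let $P_1,\dots,P_K$ be probability measures on $\mathbb{R}^n$ with finite second moments, $P_k$ supported on $\mathcal{D}_k$, and let $q_1,\dots,q_K\ge0$ with $\sum_kq_k=1$. Let $J(x)$ denote the Jacobian of $w\mapsto Ax+b$ (which depends only on $x$) and set $H_k=\int_{\mathcal{D}_k}J(x)^\top(2I_m)J(x)\,P_k(dx)$. Suppose the datasets are homogeneous, i.e. $H_1=\dots=H_K$. Then for any local parameters $w_k=(A_k,b_k)$, $k=1,\dots,K$, the weighted average $\hat w=\sum_{k=1}^Kq_kw_k$ is a minimizer of $$w\mapsto\sum_{k=1}^K q_k\int_{\mathcal{D}_k}div(\Phi(x;w_k),\Phi(x;w))\,P_k(dx).$$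
   Context: Here $w_k$ are the parameters of local models trained on client datasets $\mathcal{D}_k$ with distributions $P_k$, and the minimized objective is the distillation objective whose minimizer is the global model. ''Homogeneous'' means the matrices $H_k$ (the Hessians of the objective's $k$-th term, $\int J^\top \partial_u^2 div\, J\,dP_k$) coincide for all clients. *)

From HB Require Import structures.
From mathcomp Require Import all_boot all_order all_algebra.
From mathcomp Require Import all_classical all_reals all_analysis.
Set Implicit Arguments. Unset Strict Implicit. Unset Printing Implicit Defensive.
Import Order.TTheory GRing.Theory Num.Theory.
Import numFieldNormedType.Exports.
Local Open Scope classical_set_scope.
Local Open Scope ring_scope.

Definition Rn (R : realType) (n : nat) :=
  g_sigma_algebraType (@open 'cV[R]_n).

(* Parameter vector w = (A, b), vectorized as a column of size m*n + m:
   the top block is mxvec A (transposed), the bottom block is b. *)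
Definition param (R : realType) (m n : nat) := 'cV[R]_(m * n + m).

Definition wA (R : realType) (m n : nat) (w : param R m n) : 'M[R]_(m, n) :=
  vec_mx (usubmx w)^T.
Definition wb (R : realType) (m n : nat) (w : param R m n) : 'cV[R]_m :=
  dsubmx w.
Definition param_of (R : realType) (m n : nat) (A : 'M[R]_(m, n)) (b : 'cV[R]_m)
  : param R m n := col_mx (mxvec A)^T b.

Definition Phi (R : realType) (m n : nat) (x : 'cV[R]_n) (w : param R m n)
  : 'cV[R]_m := wA w *m x + wb w.

Definition div (R : realType) (m : nat) (u v : 'cV[R]_m) : R :=
  \sum_(i < m) (u i 0 - v i 0) ^+ 2.

(* Jacobian of the (linear) map w |-> Phi(x; w): column k is the image of
   the k-th basis vector of parameter space. *)
Definition Jac (R : realType) (m n : nat) (x : 'cV[R]_n) : 'M[R]_(m, m * n + m) :=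
  \matrix_(i < m, k < m * n + m) Phi x (delta_mx k 0 : param R m n) i 0.

Definition Hmat (R : realType) (m n : nat) (P : probability (Rn R n) R)
  (D : set (Rn R n)) : 'M[R]_(m * n + m) :=
  \matrix_(i, j) Rintegral P D
     (fun x : Rn R n => ((Jac m x)^T *m (2%:M : 'M[R]_m) *m Jac m x) i j).

Definition objective (R : realType) (m n K : nat)
  (P : 'I_K -> probability (Rn R n) R) (D : 'I_K -> set (Rn R n))
  (q : 'I_K -> R) (wk : 'I_K -> param R m n) (w : param R m n) : \bar R :=
  (\sum_(k < K) (q k)%:E *
     \int[P k]_(x in D k) (div (Phi (x : 'cV[R]_n) (wk k)) (Phi (x : 'cV[R]_n) w))%:E)%E.

From HB Require Import structures.
From mathcomp Require Import all_boot all_order all_algebra.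
From mathcomp Require Import all_classical all_reals all_analysis.
From mathcomp Require Import measurable_realfun lra.
Set Implicit Arguments. Unset Strict Implicit. Unset Printing Implicit Defensive.
Import Order.TTheory GRing.Theory Num.Theory.
Import numFieldNormedType.Exports.
Local Open Scope classical_set_scope.
Local Open Scope ring_scope.

(* For fixed x the model is linear in w with Jacobian J(x), so
   div(Phi(x;w_k), Phi(x;w)) = |J(x)(w_k - w)|^2.  Finite second moments make
   every entry of J(x)^T J(x) integrable, and integrating against P_k gives
   (w_k - w)^T H_k (w_k - w) / 2.  With a common H the objective is therefore
   sum_k q_k Q(w_k - w) / 2 for the quadratic form Q of H, and since the
   deviations w_k - hat w have weighted sum zero,
   sum_k q_k Q(w_k - w) = sum_k q_k Q(w_k - hat w) + Q(hat w - w),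
   whose last term is nonnegative because H is a second-moment matrix. *)

Section bilinear_form.
Variables (R : comPzRingType) (N : nat) (H : 'M[R]_N).
Implicit Types a b d : 'cV[R]_N.

Definition bform a b : R := (a^T *m H *m b) 0 0.

Lemma bformE a b : bform a b = \sum_i \sum_j a i 0 * b j 0 * H i j.
Proof.
rewrite /bform mxE exchange_big; apply: eq_bigr => j _.
by rewrite mxE mulr_suml; apply: eq_bigr => i _; rewrite !mxE mulrAC.
Qed.

Lemma bform_delta i j : bform (delta_mx i 0) (delta_mx j 0) = H i j.
Proof.
rewrite bformE (bigD1 i) //= (bigD1 j) //= !mxE !eqxx !mul1r.
rewrite !big1 ?addr0 // => [k ki|k kj].
  by rewrite big1 // => l _; rewrite !mxE (negbTE ki) !mul0r.
by rewrite !mxE (negbTE kj) mulr0 mul0r.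
Qed.

Lemma bformDl a d b : bform (a + d) b = bform a b + bform d b.
Proof. by rewrite /bform linearD !mulmxDl mxE. Qed.

Lemma bformDr a b d : bform a (b + d) = bform a b + bform a d.
Proof. by rewrite /bform mulmxDr mxE. Qed.

Lemma bformDD a d :
  bform (a + d) (a + d) = bform a a + bform a d + bform d a + bform d d.
Proof. by rewrite bformDl !bformDr addrA. Qed.

Lemma bform_suml I (r : seq I) (c : I -> R) (a : I -> 'cV[R]_N) b :
  bform (\sum_(i <- r) c i *: a i) b = \sum_(i <- r) c i * bform (a i) b.
Proof.
rewrite /bform raddf_sum !mulmx_suml summxE; apply: eq_bigr => i _.
by rewrite /= linearZ -!scalemxAl mxE.
Qed.

Lemma bform_sumr I (r : seq I) (c : I -> R) a (b : I -> 'cV[R]_N) :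
  bform a (\sum_(i <- r) c i *: b i) = \sum_(i <- r) c i * bform a (b i).
Proof.
rewrite /bform mulmx_sumr summxE; apply: eq_bigr => i _.
by rewrite -scalemxAr mxE.
Qed.

Lemma bform0l b : bform 0 b = 0.
Proof. by rewrite /bform trmx0 !mul0mx mxE. Qed.

Lemma bform0r a : bform a 0 = 0.
Proof. by rewrite /bform mulmx0 mxE. Qed.

Lemma bform_bias_variance K (q : 'I_K -> R) (a : 'I_K -> 'cV[R]_N) w :
  \sum_k q k = 1 ->
  \sum_k q k * bform (a k - w) (a k - w) =
  \sum_k q k * bform (a k - \sum_l q l *: a l) (a k - \sum_l q l *: a l) +
  bform (\sum_l q l *: a l - w) (\sum_l q l *: a l - w).
Proof.
move=> q1; set abar := \sum_l q l *: a l; set d := abar - w.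
have dev0 : \sum_k q k *: (a k - abar) = 0.
  rewrite (eq_bigr _ (fun k _ => scalerBr _ _ _)) sumrB -scaler_suml q1.
  by rewrite scale1r subrr.
have split_dev k : a k - w = (a k - abar) + d by rewrite addrA subrK.
clearbody d.
under eq_bigr => k _ do rewrite split_dev bformDD !mulrDr.
rewrite !big_split /= -bform_suml -bform_sumr dev0 bform0l bform0r.
by rewrite -mulr_suml q1 mul1r !addr0.
Qed.

End bilinear_form.

Definition sqnorm (R : pzRingType) k (y : 'cV[R]_k) : R := \sum_i y i 0 ^+ 2.

Lemma sqnorm_ge0 (R : realDomainType) k (y : 'cV[R]_k) : 0 <= sqnorm y.
Proof. by apply: sumr_ge0 => i _; exact: sqr_ge0. Qed.

Lemma div_sqnorm (R : realType) k (u v : 'cV[R]_k) : div u v = sqnorm (u - v).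
Proof. by apply: eq_bigr => i _; rewrite !mxE. Qed.

Section linear_model.
Variables (R : realType) (m n : nat) (x : 'cV[R]_n).

Lemma Phi_is_linear : linear (@Phi R m n x).
Proof.
move=> c u v; rewrite /Phi /wA /wb !linearP /= mulmxDl -scalemxAl scalerDr.
by rewrite addrACA.
Qed.

HB.instance Definition _ := GRing.isLinear.Build R (param R m n) 'cV[R]_m _
  (@Phi R m n x) Phi_is_linear.

Lemma mul_Jac (w : param R m n) : Jac m x *m w = Phi x w.
Proof.
apply/colP => i; rewrite mxE {2}(matrix_sum_delta w) raddf_sum summxE.
by apply: eq_bigr => k _; rewrite big_ord1 /= linearZ !mxE mulrC.
Qed.

Lemma bform_Jac (a b : param R m n) :
  bform ((Jac m x)^T *m 2%:M *m Jac m x) a b =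
  2 * \sum_r Phi x a r 0 * Phi x b r 0.
Proof.
rewrite /bform !mulmxA -trmx_mul -!mulmxA !mul_Jac mul_scalar_mx -scalemxAr.
by rewrite !mxE; congr (_ * _); apply: eq_bigr => r _; rewrite !mxE.
Qed.

End linear_model.

Section Rintegral_bform.
Context d (T : measurableType d) (R : realType).
Variable mu : {measure set T -> \bar R}.
Variables (D : set T) (mD : measurable D).

Lemma integrableZl_EFin (c : R) (f : T -> R) :
  mu.-integrable D (EFin \o f) -> mu.-integrable D (EFin \o (fun x => c * f x)).
Proof. exact: integrableZl. Qed.

Lemma integrable_EFin_sum I (s : seq I) (f : I -> T -> R) :
  (forall i, mu.-integrable D (EFin \o f i)) ->
  mu.-integrable D (EFin \o (fun x => \sum_(i <- s) f i x)).
Proof.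
move=> intf; apply: (eq_integrable mD (fun x => \sum_(i <- s) (f i x)%:E)%E).
  by move=> x _ /=; rewrite sumEFin.
by apply: integrable_sum => // i _; exact: intf.
Qed.

Lemma Rintegral_sum I (s : seq I) (f : I -> T -> R) :
  (forall i, mu.-integrable D (EFin \o f i)) ->
  \int[mu]_(x in D) \sum_(i <- s) f i x = \sum_(i <- s) \int[mu]_(x in D) f i x.
Proof.
move=> intf; elim: s => [|i s IHs].
  under eq_Rintegral do rewrite big_nil.
  by rewrite Rintegral_cst // mul0r big_nil.
under eq_Rintegral do rewrite big_cons.
by rewrite RintegralD // ?IHs ?big_cons //; exact: integrable_EFin_sum.
Qed.

Variables (N : nat) (G : T -> 'M[R]_N).
Hypothesis intG : forall i j, mu.-integrable D (EFin \o (fun x => G x i j)).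

Lemma Rintegral_bform a b :
  bform (\matrix_(i, j) \int[mu]_(x in D) G x i j) a b =
  \int[mu]_(x in D) bform (G x) a b.
Proof.
under [RHS]eq_Rintegral do rewrite bformE.
rewrite bformE Rintegral_sum; last first.
  by move=> i; apply: integrable_EFin_sum => j; exact: integrableZl_EFin.
apply: eq_bigr => i _.
rewrite Rintegral_sum; last by move=> j; exact: integrableZl_EFin.
by apply: eq_bigr => j _; rewrite RintegralZl // mxE.
Qed.

End Rintegral_bform.

Section linear_growth.
Variables (R : realType) (n : nat).
Local Notation T := (Rn R n).

Definition lin_growth (f : T -> R) := measurable_fun setT f /\
  exists C, forall x : T, f x ^+ 2 <= C * (1 + sqnorm (x : 'cV[R]_n)).

Lemma lin_growth_cst c : lin_growth (fun=> c).
Proof.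
split; first exact: measurable_cst.
by exists (c ^+ 2) => x; rewrite ler_peMr ?sqr_ge0 // lerDl sqnorm_ge0.
Qed.

Lemma lin_growth_coord i : lin_growth (fun x : T => (x : 'cV[R]_n) i 0).
Proof.
split.
  apply: (measurability _ (RGenOpens.measurableE R)).
  move=> _ [_ [a [b ->] <-]]; apply: sub_sigma_algebra; rewrite setTI.
  have /continuousP := @coord_continuous R n 1 i 0.
  by apply; exact: interval_open.
exists 1 => x; rewrite mul1r /sqnorm (bigD1 i) //=.
have : 0 <= \sum_(j < n | j != i) (x : 'cV[R]_n) j 0 ^+ 2.
  by apply: sumr_ge0 => j _; exact: sqr_ge0.
lra.
Qed.

Lemma lin_growthZ c f : lin_growth f -> lin_growth (fun x => c * f x).
Proof.
move=> [mf [C hC]]; split; first exact: measurable_funM.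
exists (c ^+ 2 * C) => x; rewrite exprMn -[_ * C * _]mulrA.
by apply: ler_wpM2l; [exact: sqr_ge0 | exact: hC].
Qed.

Lemma lin_growthD f g :
  lin_growth f -> lin_growth g -> lin_growth (fun x => f x + g x).
Proof.
move=> [mf [C1 h1]] [mg [C2 h2]]; split; first exact: measurable_funD.
exists (2 * C1 + 2 * C2) => x; have := h1 x; have := h2 x.
have := sqr_ge0 (f x - g x); nra.
Qed.

Lemma lin_growth_sum I (s : seq I) (F : I -> T -> R) :
  (forall i, lin_growth (F i)) -> lin_growth (fun x => \sum_(i <- s) F i x).
Proof.
move=> hF; elim: s => [|i s IHs].
  by under eq_fun do rewrite big_nil; exact: lin_growth_cst.
by under eq_fun do rewrite big_cons; exact: lin_growthD.
Qed.

Lemma lin_growth_Phi m (a : param R m n) r :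
  lin_growth (fun x : T => Phi (x : 'cV[R]_n) a r 0).
Proof.
under eq_fun do rewrite /Phi !mxE.
apply: lin_growthD; last exact: lin_growth_cst.
by apply: lin_growth_sum => l; apply: lin_growthZ; exact: lin_growth_coord.
Qed.

Variables (P : {finite_measure set T -> \bar R}) (D : set T).
Hypotheses (mD : measurable D)
  (P_mom2 : P.-integrable setT (fun x => (sqnorm (x : 'cV[R]_n))%:E)).

Lemma integrable_lin_growthM f g : lin_growth f -> lin_growth g ->
  P.-integrable D (EFin \o (fun x => f x * g x)).
Proof.
move=> [mf [C1 h1]] [mg [C2 h2]].
have int_bound : P.-integrable D
    (EFin \o fun x => (C1 + C2) * (1 + sqnorm (x : 'cV[R]_n))).
  apply: integrableZl_EFin => //.
  apply: (@eq_integrable _ _ _ P D mD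
    ((EFin \o cst 1%R) \+ (fun x : T => (sqnorm (x : 'cV[R]_n))%:E))%E).
    by move=> x _; rewrite /= EFinD.
  apply: integrableD => //; first exact: finite_measure_integrable_cst.
  exact: integrableS P_mom2.
apply: (le_integrable mD _ _ int_bound).
  by apply/measurable_EFinP; apply: measurable_funS (measurable_funM mf mg).
move=> x _ /=; rewrite !lee_fin; apply: le_trans (ler_norm _).
have := h1 x; have := h2 x.
have := sqr_ge0 (f x + g x); have := sqr_ge0 (f x - g x).
rewrite ler_norml; nra.
Qed.

End linear_growth.

Section second_moment_matrix.
Variables (R : realType) (m n : nat).
Variables (P : probability (Rn R n) R) (D : set (Rn R n)).
Hypotheses (mD : measurable D)
  (P_mom2 : P.-integrable setT (fun x => (sqnorm (x : 'cV[R]_n))%:E)).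

Lemma integrable_Phi_dot (a b : param R m n) :
  P.-integrable D (EFin \o fun x =>
    \sum_r Phi (x : 'cV[R]_n) a r 0 * Phi (x : 'cV[R]_n) b r 0).
Proof.
apply: integrable_EFin_sum => // r.
by apply: integrable_lin_growthM => //; exact: lin_growth_Phi.
Qed.

Lemma Hmat_qform (a : param R m n) :
  bform (Hmat m P D) a a = 2 * \int[P]_(x in D) sqnorm (Phi (x : 'cV[R]_n) a).
Proof.
rewrite /Hmat Rintegral_bform //; last first.
  move=> i j; apply: (eq_integrable mD (EFin \o fun x => 2 * \sum_r
    Phi (x : 'cV[R]_n) (delta_mx i 0) r 0 *
    Phi (x : 'cV[R]_n) (delta_mx j 0) r 0)).
    by move=> x _; rewrite /= -bform_Jac bform_delta.
  exact/integrableZl_EFin/integrable_Phi_dot.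
under eq_Rintegral do rewrite bform_Jac.
by rewrite RintegralZl //; exact: integrable_Phi_dot.
Qed.

Lemma Hmat_qform_ge0 (a : param R m n) : 0 <= bform (Hmat m P D) a a.
Proof.
by rewrite Hmat_qform mulr_ge0 // Rintegral_ge0 // => x _; exact: sqnorm_ge0.
Qed.

Lemma integral_div_Phi (u v : param R m n) :
  (\int[P]_(x in D) (div (Phi (x : 'cV[R]_n) u) (Phi (x : 'cV[R]_n) v))%:E)%E =
  (bform (Hmat m P D) (u - v) (u - v) / 2)%:E.
Proof.
rewrite Hmat_qform mulrC mulrA mulVf ?pnatr_eq0 // mul1r /Rintegral fineK.
  by apply: eq_integral => x _; rewrite div_sqnorm raddfB.
exact/integrable_fin_num/integrable_Phi_dot.
Qed.

End second_moment_matrix.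

Lemma objectiveE (R : realType) (m n K : nat)
    (P : 'I_K -> probability (Rn R n) R) (D : 'I_K -> set (Rn R n))
    (q : 'I_K -> R) (wk : 'I_K -> param R m n) (H : 'M[R]_(m * n + m)) :
  (forall k, measurable (D k)) ->
  (forall k, (P k).-integrable setT (fun x => (sqnorm (x : 'cV[R]_n))%:E)) ->
  (forall k, Hmat m (P k) (D k) = H) ->
  forall v, objective P D q wk v =
    ((\sum_k q k * bform H (wk k - v) (wk k - v)) / 2)%:E.
Proof.
move=> mD mom2 HkE v; rewrite /objective mulr_suml -sumEFin.
by apply: eq_bigr => k _; rewrite integral_div_Phi // HkE -EFinM mulrA.
Qed.

Theorem corollary1 (R : realType) (m n K : nat) (HK : (0 < K)%N)
  (P : 'I_K -> probability (Rn R n) R) (D : 'I_K -> set (Rn R n))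
  (q : 'I_K -> R)
  (HD : forall k, measurable (D k))
  (Hsupp : forall k, P k (D k) = 1%E)
  (Hmom2 : forall k, (P k).-integrable setT
             (fun x : Rn R n => (\sum_(i < n) ((x : 'cV[R]_n) i 0) ^+ 2)%:E))
  (Hq0 : forall k, 0 <= q k)
  (Hq1 : \sum_(k < K) q k = 1)
  (Hhom : forall k l, Hmat m (P k) (D k) = Hmat m (P l) (D l))
  (wk : 'I_K -> param R m n) :
  forall w : param R m n,
    (objective P D q wk (\sum_(k < K) q k *: wk k)%R <= objective P D q wk w)%E.
Proof.
move=> w; pose k0 := Ordinal HK.
have HkE k : Hmat m (P k) (D k) = Hmat m (P k0) (D k0) by exact: Hhom.
rewrite !(objectiveE _ _ HD Hmom2 HkE) lee_fin ler_wpM2r ?invr_ge0 //.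
rewrite [leRHS](bform_bias_variance _ _ _ Hq1) lerDl.
exact: Hmat_qform_ge0.
Qed.
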